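(* Consider the partition posets of $\{1,\dots,n\}$ ordered by refinement (the operadic partition posets of the commutative operad $\operatorname{Com}$), with the labelling which labels the edge between a partition $(A_1,\dots,A_p)$ and the partition obtained by merging two parts $A_i$ and $A_j$ by $\max(\min A_i,\min A_j)$. This labelling is compatible with isomorphisms of subposets.
   Context: $\operatorname{Com}$ is the basic-set operad with a single element $e_n$ in each arity $n\ge1$, with $\gamma(e_p;e_{k_1},\dots,e_{k_p})=e_{k_1+\dots+k_p}$, generated by a binary symmetric operation; its $\operatorname{Com}$-partitions of a set are the usual set partitions and the order is refinement. For a covering $\lambda\prec\omega$ merging $A_i$ and $A_j$, set $D_\lambda^\omega=\{\min A_i,\min A_j\}$ and $\delta_\lambda^\omega$ the element $e_2$ on these two points; for a general $\lambda\le\omega$, $D_\lambda^\omega$ is the set of minima of the parts of $\lambda$ lying in parts of $\omega$ which are not parts of $\lambda$, and $\delta_\lambda^\omega$ the corresponding partition of $D_\lambda^\omega$ induced by $\omega$. Two interval subposets $\Pi_1,\Pi_2$ (of possibly different partition posets) with $E_i=\bigcup_{\lambda\le\omega\in\Pi_i}D_\lambda^\omega$ are isomorphic if there is a poset isomorphism $g:\Pi_1\to\Pi_2$ and an increasing bijection $f:E_1\to E_2$ with $\delta_{g(\lambda)}^{g(\omega)}=f(\delta_\lambda^\omega)$ for every covering $\lambda\prec\omega$. A family of labellings is compatible with isomorphisms of subposets if every such isomorphism induces a map on labels sending increasing chains to increasing chains, non-increasing chains to non-increasing chains, and preserving the lexicographic preorder on chains. *)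

From mathcomp Require Import all_boot.
Set Implicit Arguments. Unset Strict Implicit. Unset Printing Implicit Defensive.

(* The ground set {1,...,n} is represented by 'I_n, the ordinal i standing
   for the integer i+1.  A set partition (= Com-partition) of {1,...,n} is a
   P : {set {set 'I_n}} with [partition P [set: 'I_n]]. *)
Notation part n := {set {set 'I_n}}.

Definition is_part n (P : part n) : bool := partition P [set: 'I_n].

Definition refines n (lam om : part n) : bool :=
  [forall A in lam, exists B in om, A \subset B].

Definition merges n (lam om : part n) (A B : {set 'I_n}) : Prop :=
  [/\ A \in lam, B \in lam, A != B & om = (lam :\ A :\ B) :|: [set A :|: B]].

Definition covers n (lam om : part n) : Prop :=
  exists A B, merges lam om A B.

Definition is_min n (A : {set 'I_n}) (i : 'I_n) : bool :=
  (i \in A) && [forall j in A, i <= j].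

Definition min1 n (A : {set 'I_n}) : nat := (\big[minn/n]_(i in A) (i : nat)).+1.

Definition Dset n (lam om : part n) : {set 'I_n} :=
  [set i | [exists A in lam, is_min A i &&
             [exists B in om, (A \subset B) && (B \notin lam)]]].

Definition delta n (lam om : part n) : {set {set 'I_n}} :=
  [set B :&: Dset lam om | B in om & B :&: Dset lam om != set0].

Definition in_interval n (a b x : part n) : bool :=
  [&& is_part x, refines a x & refines x b].

Definition is_interval n (a b : part n) : bool :=
  [&& is_part a, is_part b & refines a b].

Definition Eset n (a b : part n) : {set 'I_n} :=
  [set i | [exists lam, exists om,
     [&& in_interval a b lam, in_interval a b om, refines lam om &
         i \in Dset lam om]]].

Definition subposet_iso n1 n2 (a1 b1 : part n1) (a2 b2 : part n2)
    (g : part n1 -> part n2) (f : 'I_n1 -> 'I_n2) : Prop :=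
  [/\
      (forall x, in_interval a1 b1 x -> in_interval a2 b2 (g x)),
      (forall x y, in_interval a1 b1 x -> in_interval a1 b1 y -> g x = g y -> x = y),
      (forall y, in_interval a2 b2 y -> exists2 x, in_interval a1 b1 x & g x = y) &
      (forall x y, in_interval a1 b1 x -> in_interval a1 b1 y ->
          refines x y = refines (g x) (g y))] /\
  (
      [/\ (forall i, i \in Eset a1 b1 -> f i \in Eset a2 b2),
          (forall i j, i \in Eset a1 b1 -> j \in Eset a1 b1 ->
             (i < j)%N -> (f i < f j)%N) &
          (forall j, j \in Eset a2 b2 -> exists2 i, i \in Eset a1 b1 & f i = j)] /\
      (forall lam om, in_interval a1 b1 lam -> in_interval a1 b1 om ->
          covers lam om ->
          delta (g lam) (g om) = [set f @: (X : {set 'I_n1}) | X in delta lam om])).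

Definition labelling := forall n, part n -> part n -> nat.

Fixpoint cover_path n (x : part n) (s : seq (part n)) : Prop :=
  if s is y :: s' then covers x y /\ cover_path y s' else True.

Definition max_chain n (a b : part n) (s : seq (part n)) : Prop :=
  cover_path a s /\ last a s = b.

Definition chain_labels (lab : labelling) n (a : part n) (s : seq (part n)) : seq nat :=
  pairmap (@lab n) a s.

Definition increasing (s : seq nat) : bool := sorted ltn s.

Fixpoint lex_le (s t : seq nat) : bool :=
  match s, t with
  | [::], _ => true
  | _ :: _, [::] => false
  | x :: s', y :: t' => (x < y)%N || ((x == y) && lex_le s' t')
  end.

Definition compatible_with_isos (lab : labelling) : Prop :=
  forall n1 n2 (a1 b1 : part n1) (a2 b2 : part n2)
         (g : part n1 -> part n2) (f : 'I_n1 -> 'I_n2),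
    is_interval a1 b1 -> is_interval a2 b2 -> subposet_iso a1 b1 a2 b2 g f ->
    exists phi : nat -> nat,
      (forall lam om, in_interval a1 b1 lam -> in_interval a1 b1 om ->
          covers lam om -> lab n2 (g lam) (g om) = phi (lab n1 lam om)) /\
      (forall s, max_chain a1 b1 s ->
          (increasing (chain_labels lab a1 s) ->
             increasing (chain_labels lab (g a1) (map g s))) /\
          (~~ increasing (chain_labels lab a1 s) ->
             ~~ increasing (chain_labels lab (g a1) (map g s)))) /\
      (forall s t, max_chain a1 b1 s -> max_chain a1 b1 t ->
          lex_le (chain_labels lab a1 s) (chain_labels lab a1 t) ->
          lex_le (chain_labels lab (g a1) (map g s))
                 (chain_labels lab (g a1) (map g t))).

(* For a covering, lam :\: om = {A_i, A_j}, the two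
   merged parts.  (Off coverings the value is irrelevant.) *)
Definition com_label : labelling :=
  fun n lam om => \max_(A in lam :\: om) min1 A.

From mathcomp Require Import all_boot.
Set Implicit Arguments. Unset Strict Implicit. Unset Printing Implicit Defensive.

(* A covering lam < om merges two blocks A, B of lam, with minima mA, mB;
   then D_lam^om = {mA, mB}, delta_lam^om = {{mA, mB}} and the label is
   max(mA, mB).  An isomorphism (g, f) of interval subposets preserves
   coverings: a partition strictly between g lam and g om would pull back to
   one strictly between lam and om, which counting blocks rules out.  The
   compatibility with the deltas then forces g lam < g om to merge blocks with
   minima f mA, f mB, so the new label is f applied to the old one.  Since f
   is increasing on E, relabelling preserves strict increase and the
   lexicographic order of label sequences. *)

Section Partitions.

Variable n : nat.
Implicit Types (P x y z : part n) (A B C : {set 'I_n}).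

Lemma pblock_part_mem P i : is_part P -> pblock P i \in P.
Proof. by move=> /cover_partition cP; apply: pblock_mem; rewrite cP inE. Qed.

Lemma mem_pblock_part P i : is_part P -> i \in pblock P i.
Proof. by move=> /cover_partition cP; rewrite mem_pblock cP inE. Qed.

Lemma part_block_eq P A B i :
  is_part P -> A \in P -> B \in P -> i \in A -> i \in B -> A = B.
Proof.
move=> /partition_trivIset tP PA PB iA iB.
by rewrite -(def_pblock tP PA iA) (def_pblock tP PB iB).
Qed.

Lemma part_block_neq0 P A : is_part P -> A \in P -> exists i, i \in A.
Proof. by move=> pP PA; apply/set0Pn; apply: partition_neq0 pP PA. Qed.

Lemma refinesP x y :
  reflect (forall A, A \in x -> exists2 C, C \in y & A \subset C) (refines x y).
Proof.
apply: (iffP forall_inP) => H A /H; first by case/exists_inP=> C; exists C.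
by case=> C yC sAC; apply/exists_inP; exists C.
Qed.

Lemma refines_refl x : refines x x.
Proof. by apply/refinesP => A xA; exists A. Qed.

Lemma refines_trans x y z : refines x y -> refines y z -> refines x z.
Proof.
move=> /refinesP rxy /refinesP ryz; apply/refinesP => A /rxy[B /ryz[C zC sBC] sAB].
by exists C; rewrite // (subset_trans sAB sBC).
Qed.

Lemma refines_block x y A C i : is_part y -> refines x y ->
  A \in x -> C \in y -> i \in A -> i \in C -> A \subset C.
Proof.
move=> py /refinesP rxy xA yC iA iC; have [D yD sAD] := rxy A xA.
by rewrite (part_block_eq py yC yD iC (subsetP sAD i iA)).
Qed.

Definition block_of y A : {set 'I_n} :=
  if [pick i in A] is Some i then pblock y i else set0.

Lemma block_of_eq y A C i :
  is_part y -> C \in y -> i \in A -> A \subset C -> block_of y A = C.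
Proof.
move=> /partition_trivIset ty yC iA sAC; rewrite /block_of.
case: pickP => [j jA | /(_ i)]; last by rewrite iA.
by apply: def_pblock; rewrite // (subsetP sAC).
Qed.

Lemma block_of_refines x y A : is_part x -> is_part y -> refines x y -> A \in x ->
  block_of y A \in y /\ A \subset block_of y A.
Proof.
move=> px py /refinesP rxy xA; have [C yC sAC] := rxy A xA.
have [i iA] := part_block_neq0 px xA.
by rewrite (block_of_eq py yC iA sAC).
Qed.

Lemma imset_block_of x y : is_part x -> is_part y -> refines x y ->
  block_of y @: x = y.
Proof.
move=> px py rxy; apply/setP => C; apply/imsetP/idP => [[A xA ->] | yC].
  by case: (block_of_refines px py rxy xA).
have [i iC] := part_block_neq0 py yC.
have xA := pblock_part_mem i px; have iA := mem_pblock_part i px.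
exists (pblock x i) => //.
by rewrite (block_of_eq py yC iA) // (refines_block py rxy xA yC iA iC).
Qed.

(* block_of y maps the blocks of x onto those of y, injectively only when
   x = y. *)
Lemma card_refines x y : is_part x -> is_part y -> refines x y ->
  #|y| <= #|x| ?= iff (x == y).
Proof.
move=> px py rxy; have imsetE := imset_block_of px py rxy.
rewrite -{1}imsetE; split; first exact: leq_imset_card.
apply/imset_injP/eqP => [inj_block | <- A B xA xB]; last first.
  have [i iA] := part_block_neq0 px xA; have [j jB] := part_block_neq0 px xB.
  by rewrite (block_of_eq px xA iA) // (block_of_eq px xB jB).
rewrite -imsetE -[LHS]imset_id; apply/esym/eq_in_imset => A xA.
have [yC sAC] := block_of_refines px py rxy xA.
apply/eqP; rewrite eqEsubset sAC andbT; apply/subsetP => i iC.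
have xA' := pblock_part_mem i px; have iA' := mem_pblock_part i px.
have sA'C := refines_block py rxy xA' yC iA' iC.
by rewrite -(inj_block _ _ xA' xA (block_of_eq py yC iA' sA'C)).
Qed.

Lemma refines_merged_blocks x y : is_part x -> is_part y -> refines x y -> x != y ->
  exists A B, [/\ A \in x, B \in x, A != B & block_of y A = block_of y B].
Proof.
move=> px py rxy nxy.
suff /exists_inP[A xA /exists_inP[B xB /andP[nAB /eqP eAB]]] :
    [exists A in x, exists B in x, (A != B) && (block_of y A == block_of y B)].
  by exists A, B.
apply: contraR nxy => /exists_inPn noMerge.
rewrite -(card_refines px py rxy) -{1}(imset_block_of px py rxy).
apply/imset_injP => A B xA xB eAB; apply/eqP; apply: contraNT (noMerge A xA) => nAB.
by apply/exists_inP; exists B; rewrite // nAB eAB eqxx.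
Qed.

Lemma setU_blocks_notin P A B :
  is_part P -> A \in P -> B \in P -> A != B -> A :|: B \notin P.
Proof.
move=> pP PA PB nAB; apply/negP => PAB.
have [i iA] := part_block_neq0 pP PA; have [j jB] := part_block_neq0 pP PB.
have eA := part_block_eq pP PA PAB iA (subsetP (subsetUl A B) i iA).
have eB := part_block_eq pP PB PAB jB (subsetP (subsetUr A B) j jB).
by move/eqP: nAB; apply; rewrite eA -eB.
Qed.

Lemma blocks_sub_setU P A B D : is_part P -> A \in P -> B \in P -> D \in P ->
  D \subset A :|: B -> D = A \/ D = B.
Proof.
move=> pP PA PB PD sDAB; have [i iD] := part_block_neq0 pP PD.
case/setUP: (subsetP sDAB i iD) => [iA | iB].
  by left; apply: part_block_eq pP PD PA iD iA.
by right; apply: part_block_eq pP PD PB iD iB.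
Qed.

End Partitions.

Section Merges.

Variable n : nat.
Implicit Types (w x y z : part n) (A B C : {set 'I_n}).

Lemma mem_merges x y A B C : merges x y A B ->
  (C \in y) = (C == A :|: B) || [&& C != B, C != A & C \in x].
Proof. by case=> _ _ _ ->; rewrite !inE orbC. Qed.

Lemma merge_refines x y A B : merges x y A B -> refines x y.
Proof.
move=> mxy; apply/refinesP => C xC.
have ABy : A :|: B \in y by rewrite (mem_merges _ mxy) eqxx.
case: (eqVneq C B) => [-> | nCB]; first by exists (A :|: B); rewrite ?subsetUr.
case: (eqVneq C A) => [-> | nCA]; first by exists (A :|: B); rewrite ?subsetUl.
by exists C; rewrite // (mem_merges _ mxy) nCA nCB xC orbT.
Qed.

Lemma merge_is_part x y A B : is_part x -> merges x y A B -> is_part y.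
Proof.
move=> px [xA xB nAB ->]; rewrite setUC /is_part.
have pxAB : partition (x :\ A :\ B) ([set: 'I_n] :\: A :\: B).
  by apply: partitionD1; rewrite ?(partitionD1 px) // !inE eq_sym nAB.
have [i iA] := part_block_neq0 px xA.
have ABn0 : A :|: B != set0 by apply/set0Pn; exists i; rewrite inE iA.
have ABdisj : [disjoint A :|: B & [set: 'I_n] :\: A :\: B].
  rewrite -setI_eq0; apply/eqP/setP => j.
  by rewrite !inE; case: (j \in A); case: (j \in B).
have -> : [set: 'I_n] = A :|: B :|: ([set: 'I_n] :\: A :\: B).
  by apply/setP => j; rewrite !inE; case: (j \in A); case: (j \in B).
exact: partitionU1.
Qed.

Lemma card_merge x y A B : is_part x -> merges x y A B -> #|x| = #|y|.+1.
Proof.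
move=> px [xA xB nAB ->]; have xABF := negbTE (setU_blocks_notin px xA xB nAB).
rewrite setUC cardsU1 (cardsD1 A x) (cardsD1 B (x :\ A)) xA !inE eq_sym nAB xB.
by rewrite xABF !andbF.
Qed.

Lemma merge_between x y w A B : is_part x -> merges x y A B -> is_part w ->
  refines x w -> refines w y -> w = x \/ w = y.
Proof.
move=> px mxy pw rxw rwy; have py := merge_is_part px mxy.
have [le_wx /esym eq_wx] := card_refines px pw rxw.
have [le_yw /esym eq_yw] := card_refines pw py rwy.
move: le_wx le_yw; rewrite (card_merge px mxy) leq_eqVlt ltnS.
case/orP => [/eqP e _ | le_wy le_yw].
  by left; apply/esym/eqP; rewrite eq_wx e (card_merge px mxy).
by right; apply/eqP; rewrite eq_yw eqn_leq le_wy le_yw.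
Qed.

Lemma refines_merge x y z A B : is_part x -> is_part y -> refines x y ->
  merges x z A B -> block_of y A = block_of y B -> refines z y.
Proof.
move=> px py rxy mxz eAB; have [xA xB _ _] := mxz.
apply/refinesP => C; rewrite (mem_merges _ mxz).
case/orP => [/eqP -> | /and3P[_ _ xC]]; last by move/refinesP: rxy; apply.
have [yC sAC] := block_of_refines px py rxy xA.
have [_ sBC] := block_of_refines px py rxy xB.
by exists (block_of y A); rewrite // subUset sAC eAB sBC.
Qed.

Lemma setD_merge x y A B : is_part x -> merges x y A B -> x :\: y = [set A; B].
Proof.
move=> px mxy; have [xA xB nAB _] := mxy.
have xABF := negbTE (setU_blocks_notin px xA xB nAB).
have nA : A != A :|: B by apply: contraFneq xABF => <-.
have nB : B != A :|: B by apply: contraFneq xABF => <-.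
apply/setP => C; rewrite !inE (mem_merges _ mxy).
case: (eqVneq C A) => [-> | nCA]; first by rewrite (negbTE nA) xA /= andbF.
case: (eqVneq C B) => [-> | nCB]; first by rewrite (negbTE nB) xB.
by case: (C \in x); rewrite ?orbT ?andbF.
Qed.

Lemma covers_is_part x y : is_part x -> covers x y -> is_part y.
Proof. by move=> px [A [B /(merge_is_part px)]]. Qed.

Lemma covers_refines x y : covers x y -> refines x y.
Proof. by case=> A [B /merge_refines]. Qed.

Lemma cover_path_refines x s :
  is_part x -> cover_path x s -> refines x (last x s).
Proof.
elim: s x => [|y s IH] x px /=; first by rewrite refines_refl.
case=> cxy /(IH y (covers_is_part px cxy)); exact: refines_trans (covers_refines cxy).
Qed.

End Merges.

Lemma geq_bigminn (I : eqType) (r : seq I) (P : pred I) (F : I -> nat) d j :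
  j \in r -> P j -> \big[minn/d]_(i <- r | P i) F i <= F j.
Proof.
move=> + Pj; elim: r => // i r IH; rewrite inE big_cons => /orP[/eqP <- | jr].
  by rewrite Pj geq_minl.
by case: (P i) => /=; [apply: leq_trans (geq_minr _ _) (IH jr) | apply: IH].
Qed.

Section Minima.

Variable n : nat.
Implicit Types (x y : part n) (A B : {set 'I_n}).

Lemma is_min_exists A : (exists i, i \in A) -> exists m, is_min A m.
Proof.
case=> i iA; have [m mA min_m] := arg_minnP (fun j : 'I_n => val j) iA.
by exists m; apply/andP; split => //; apply/forall_inP => j /min_m.
Qed.

Lemma is_min_uniq A i j : is_min A i -> is_min A j -> i = j.
Proof.
case/andP=> iA /forall_inP min_i /andP[jA /forall_inP min_j].
by apply/val_inj/anti_leq; rewrite min_i // min_j.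
Qed.

Lemma min1_is_min A m : is_min A m -> min1 A = m.+1.
Proof.
case/andP=> mA /forall_inP min_m; congr _.+1; apply/anti_leq.
rewrite geq_bigminn ?mem_index_enum //=.
apply: (big_ind (leq m)) => [|u v|j /min_m] //; first exact: ltnW.
by rewrite leq_min => -> ->.
Qed.

Lemma Dset_merge x y A B mA mB : is_part x -> merges x y A B ->
  is_min A mA -> is_min B mB -> Dset x y = [set mA; mB].
Proof.
move=> px mxy minA minB; have [xA xB nAB _] := mxy.
have xABF := negbTE (setU_blocks_notin px xA xB nAB).
apply/setP => i; rewrite !inE; apply/exists_inP/orP.
  case=> D xD /andP[minD /exists_inP[E yE /andP[sDE xE]]].
  move: yE; rewrite (mem_merges _ mxy) (negbTE xE) !andbF orbF => /eqP eE.
  rewrite eE in sDE; case: (blocks_sub_setU px xA xB xD sDE) => eD; subst D.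
    by left; rewrite (is_min_uniq minD minA).
  by right; rewrite (is_min_uniq minD minB).
have yAB : A :|: B \in y by rewrite (mem_merges _ mxy) eqxx.
by case=> /eqP ->; [exists A | exists B]; rewrite // ?minA ?minB;
  apply/exists_inP; exists (A :|: B); rewrite ?subsetUl ?subsetUr ?xABF.
Qed.

Lemma delta_merge x y A B mA mB : is_part x -> merges x y A B ->
  is_min A mA -> is_min B mB -> delta x y = [set [set mA; mB]].
Proof.
move=> px mxy minA minB; have [xA xB _ _] := mxy.
have yAB : A :|: B \in y by rewrite (mem_merges _ mxy) eqxx.
have [mAA _] := andP minA; have [mBB _] := andP minB.
have sDAB : [set mA; mB] \subset A :|: B.
  by apply/subsetP => i; rewrite !inE => /orP[] /eqP ->; rewrite ?mAA ?mBB ?orbT.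
rewrite /delta (Dset_merge px mxy minA minB); apply/setP => Z; rewrite inE.
apply/imsetP/eqP => [[C] | ->].
  rewrite inE (mem_merges _ mxy) => /andP[/orP[/eqP -> _ | /and3P[nCB nCA xC]]].
    by move=> ->; apply/setIidPr.
  case/set0Pn => i; rewrite !inE => /andP[iC /orP[] /eqP ei]; subst i.
    by move/eqP: nCA; case; apply: part_block_eq px xC xA iC mAA.
  by move/eqP: nCB; case; apply: part_block_eq px xC xB iC mBB.
exists (A :|: B); last by apply/esym/setIidPr.
rewrite inE yAB; apply/set0Pn; exists mA; by rewrite !inE eqxx mAA.
Qed.

Lemma com_label_merge x y A B mA mB : is_part x -> merges x y A B ->
  is_min A mA -> is_min B mB -> com_label x y = maxn mA.+1 mB.+1.
Proof.
move=> px mxy minA minB; have [_ _ nAB _] := mxy.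
rewrite /com_label (setD_merge px mxy) big_setU1 ?inE //= big_set1.
by rewrite (min1_is_min minA) (min1_is_min minB).
Qed.

End Minima.

Section MonotoneRelabelling.

Variables (D : {pred nat}) (phi : nat -> nat).
Hypothesis phi_mono : {in D &, {mono phi : x y / x <= y}}.

Lemma maxn_mono_in : {in D &, {morph phi : x y / maxn x y}}.
Proof.
move=> x y xD yD /=; case: (leqP x y) => [le_xy | /ltnW le_yx].
  by apply/esym/maxn_idPr; rewrite phi_mono.
by apply/esym/maxn_idPl; rewrite phi_mono.
Qed.

Lemma sorted_ltn_map_in s : {subset s <= D} -> sorted ltn (map phi s) = sorted ltn s.
Proof.
move=> sD; rewrite sorted_map; apply: (@eq_in_sorted _ D); last exact/allP.
by move=> x y xD yD /=; rewrite (leqW_mono_in phi_mono).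
Qed.

Lemma lex_le_map_in s t : {subset s <= D} -> {subset t <= D} ->
  lex_le (map phi s) (map phi t) = lex_le s t.
Proof.
have phi_inj := incn_inj_in phi_mono; have phi_lt := leqW_mono_in phi_mono.
elim: s t => [|a s IH] [|b t] //= sD tD.
have aD : a \in D by apply: sD; rewrite inE eqxx.
have bD : b \in D by apply: tD; rewrite inE eqxx.
rewrite phi_lt // (inj_in_eq phi_inj) // IH // => k kt.
  by apply: sD; rewrite inE kt orbT.
by apply: tD; rewrite inE kt orbT.
Qed.

End MonotoneRelabelling.

Lemma maxn_set2 (T : finType) (F : T -> nat) (a b : T) :
  \max_(i in [set a; b]) F i = maxn (F a) (F b).
Proof.
case: (eqVneq a b) => [<- | nab]; first by rewrite setUid big_set1 maxnn.
by rewrite big_setU1 ?inE //= big_set1.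
Qed.

Lemma Dset_sub_Eset n (a b lam om : part n) :
  in_interval a b lam -> in_interval a b om -> refines lam om ->
  Dset lam om \subset Eset a b.
Proof.
move=> Ilam Iom rlo; apply/subsetP => i iD; rewrite inE.
by apply/existsP; exists lam; apply/existsP; exists om; rewrite Ilam Iom rlo.
Qed.

Definition Elabels n (a b : part n) : {pred nat} :=
  [pred k | [exists m in Eset a b, k == (val m).+1]].

(* f acting on 1-based labels; the value at 0, never a label, is junk. *)
Definition relabel n1 n2 (f : 'I_n1 -> 'I_n2) (k : nat) : nat :=
  if insub k.-1 is Some i then (f i).+1 else 0.

Lemma relabelE n1 n2 (f : 'I_n1 -> 'I_n2) (i : 'I_n1) : relabel f i.+1 = (f i).+1.
Proof. by rewrite /relabel /= valK. Qed.

Section Isomorphism.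

Variables (n1 n2 : nat) (a1 b1 : part n1) (a2 b2 : part n2).
Variables (g : part n1 -> part n2) (f : 'I_n1 -> 'I_n2).
Hypothesis iso : subposet_iso a1 b1 a2 b2 g f.

Local Notation I1 := (in_interval a1 b1).
Local Notation I2 := (in_interval a2 b2).

Lemma iso_covers lam om : I1 lam -> I1 om -> covers lam om -> covers (g lam) (g om).
Proof.
have [[g_in g_inj g_onto g_ref] _] := iso.
move=> Ilam Iom clo; have Iglam := g_in _ Ilam; have Igom := g_in _ Iom.
have /and3P[plam _ _] := Ilam; have /and3P[pglam a2glam _] := Iglam.
have /and3P[pgom _ gomb2] := Igom.
have [A [B mAB]] := clo; have card_lo := card_merge plam mAB.
have rg : refines (g lam) (g om) by rewrite -g_ref // covers_refines.
have ng : g lam != g om.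
  by apply/eqP => /(g_inj _ _ Ilam Iom) elo; move: card_lo; rewrite elo => /n_Sn.
have [A' [B' [xA' xB' nAB' eAB']]] := refines_merged_blocks pglam pgom rg ng.
(* z merges two blocks of g lam inside one block of g om, so its preimage w
   lies between lam and om. *)
pose z := g lam :\ A' :\ B' :|: [set A' :|: B'].
have mz : merges (g lam) z A' B' by [].
have rzom := refines_merge pglam pgom rg mz eAB'.
have Iz : I2 z.
  rewrite /in_interval (merge_is_part pglam mz) (refines_trans rzom gomb2).
  by rewrite (refines_trans a2glam (merge_refines mz)).
have [w Iw gw] := g_onto _ Iz; have /and3P[pw _ _] := Iw.
have rlw : refines lam w by rewrite g_ref // gw (merge_refines mz).
have rwo : refines w om by rewrite g_ref // gw.
case: (merge_between plam mAB pw rlw rwo) => ew; subst w.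
  by move: (card_merge pglam mz); rewrite -gw => /n_Sn.
by rewrite gw; exists A', B'.
Qed.

Lemma relabel_mono : {in Elabels a1 b1 &, {mono relabel f : x y / x <= y}}.
Proof.
have [_ [[_ f_lt _] _]] := iso; apply: leq_mono_in.
move=> _ _ /exists_inP[i iE /eqP ->] /exists_inP[j jE /eqP ->].
by rewrite !relabelE !ltnS; apply: f_lt.
Qed.

Lemma iso_com_label lam om : I1 lam -> I1 om -> covers lam om ->
  com_label lam om \in Elabels a1 b1 /\
  com_label (g lam) (g om) = relabel f (com_label lam om).
Proof.
have [[g_in _ _ _] [_ f_delta]] := iso.
move=> Ilam Iom clo; have /and3P[plam _ _] := Ilam; have /and3P[pglam _ _] := g_in _ Ilam.
have [A [B mAB]] := clo; have [xA xB _ _] := mAB.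
have [mA minA] := is_min_exists (part_block_neq0 plam xA).
have [mB minB] := is_min_exists (part_block_neq0 plam xB).
have [A' [B' mAB']] := iso_covers Ilam Iom clo; have [xA' xB' _ _] := mAB'.
have [mA' minA'] := is_min_exists (part_block_neq0 pglam xA').
have [mB' minB'] := is_min_exists (part_block_neq0 pglam xB').
have sDE := Dset_sub_Eset Ilam Iom (covers_refines clo).
rewrite (Dset_merge plam mAB minA minB) in sDE.
have mAl : mA.+1 \in Elabels a1 b1.
  by apply/exists_inP; exists mA; rewrite // (subsetP sDE) ?inE ?eqxx.
have mBl : mB.+1 \in Elabels a1 b1.
  by apply/exists_inP; exists mB; rewrite // (subsetP sDE) ?inE ?eqxx ?orbT.
have min_imageE : [set mA'; mB'] = [set f mA; f mB].
  move: (f_delta _ _ Ilam Iom clo).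
  rewrite (delta_merge pglam mAB' minA' minB') (delta_merge plam mAB minA minB).
  by rewrite imset_set1 imsetU1 imset_set1 => /set1_inj.
rewrite (com_label_merge plam mAB minA minB) (com_label_merge pglam mAB' minA' minB').
split; first by rewrite /maxn; case: ltnP.
rewrite (maxn_mono_in relabel_mono) // !relabelE !maxnSS.
by rewrite -(maxn_set2 val) min_imageE maxn_set2.
Qed.

Lemma iso_chain_labels x s : I1 x -> cover_path x s -> last x s = b1 ->
  {subset chain_labels com_label x s <= Elabels a1 b1} /\
  chain_labels com_label (g x) (map g s) = map (relabel f) (chain_labels com_label x s).
Proof.
elim: s x => [|y s IH] x Ix //= [cxy cys] lasty.
have /and3P[px a1x _] := Ix; have py := covers_is_part px cxy.
have Iy : I1 y.
  rewrite /in_interval py (refines_trans a1x (covers_refines cxy)) -lasty.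
  exact: cover_path_refines.
have [lab_xy g_xy] := iso_com_label Ix Iy cxy; have [sub_ys g_ys] := IH y Iy cys lasty.
rewrite /chain_labels /= in sub_ys g_ys *; rewrite g_xy g_ys; split => // k.
by rewrite inE => /orP[/eqP -> // | /sub_ys].
Qed.

End Isomorphism.

Theorem mainTheorem4 : compatible_with_isos com_label.
Proof.
move=> n1 n2 a1 b1 a2 b2 g f /and3P[pa1 _ a1b1] _ iso.
have Ia1 : in_interval a1 b1 a1 by rewrite /in_interval pa1 refines_refl.
exists (relabel f); split.
  by move=> lam om Ilam Iom clo; case: (iso_com_label iso Ilam Iom clo).
split => [s [cps lasts] | s t [cps lasts] [cpt lastt]].
  have [sub ->] := iso_chain_labels iso Ia1 cps lasts.
  by rewrite /increasing (sorted_ltn_map_in (relabel_mono iso) sub).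
have [subs ->] := iso_chain_labels iso Ia1 cps lasts.
have [subt ->] := iso_chain_labels iso Ia1 cpt lastt.
by rewrite (lex_le_map_in (relabel_mono iso) subs subt).
Qed.
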